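(* Let $\epsilon\in(0,1/2)$, $\eta\in(\epsilon,1-\epsilon)^{2p}$, $\xi_1,\omega_1,\xi_2,\omega_2\in(\epsilon,1-\epsilon)$ with $\xi_1\omega_1=\xi_2\omega_2$, and $\pi$ an everywhere positive probability mass function on $\{0,1\}^p$. Then $p^{\mathrm{ARN}}_{(\xi_1\eta,\omega_1)}(\gamma,\gamma')=p^{\mathrm{ARN}}_{(\xi_2\eta,\omega_2)}(\gamma,\gamma')$ for all $\gamma,\gamma'\in\{0,1\}^p$.
   Context: $\eta=(A,D)$, $c\eta=(cA,cD)$. Neighbourhood indicator distribution: $p^{\mathrm{RN}}_{\xi\eta}(k\mid\gamma)=\prod_j p_j(k_j\mid\gamma_j)$ with $p_j(1\mid0)=\xi A_j$, $p_j(0\mid0)=1-\xi A_j$, $p_j(1\mid1)=\xi D_j$, $p_j(0\mid1)=1-\xi D_j$. $N(\gamma,k)=\{\gamma^*:\gamma^*_j=\gamma_j\ \forall j\text{ with }k_j=0\}$, $p_k=\sum_jk_j$, $d_H$ Hamming distance, $q^{\mathrm{THIN}}_{\omega,k}(\gamma,\gamma')=\omega^{d_H(\gamma,\gamma')}(1-\omega)^{p_k-d_H(\gamma,\gamma')}\mathbb{I}\{\gamma'\in N(\gamma,k)\}$. ARN acceptance $\alpha^{\mathrm{ARN}}_{(\xi\eta,\omega),k}(\gamma,\gamma')=\min\{1,\frac{\pi(\gamma')p^{\mathrm{RN}}_{\xi\eta}(k\mid\gamma')q^{\mathrm{THIN}}_{\omega,k}(\gamma',\gamma)}{\pi(\gamma)p^{\mathrm{RN}}_{\xi\eta}(k\mid\gamma)q^{\mathrm{THIN}}_{\omega,k}(\gamma,\gamma')}\}$;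 ARN kernel for $\gamma'\ne\gamma$: $p^{\mathrm{ARN}}_{(\xi\eta,\omega)}(\gamma,\gamma')=\sum_kp^{\mathrm{RN}}_{\xi\eta}(k\mid\gamma)q^{\mathrm{THIN}}_{\omega,k}(\gamma,\gamma')\alpha^{\mathrm{ARN}}_{(\xi\eta,\omega),k}(\gamma,\gamma')$, and $p^{\mathrm{ARN}}(\gamma,\gamma)=1-\sum_{\gamma'\ne\gamma}p^{\mathrm{ARN}}(\gamma,\gamma')$. *)

From mathcomp Require Import all_boot all_order all_algebra.
From mathcomp Require Import reals.
Set Implicit Arguments. Unset Strict Implicit. Unset Printing Implicit Defensive.
Import Order.TTheory GRing.Theory Num.Theory.
Local Open Scope ring_scope.

(* Model space {0,1}^p as {ffun 'I_p -> bool}; neighbourhood indicators k likewise. *)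
Definition state (p : nat) := {ffun 'I_p -> bool}.

Section ARN.
Variables (R : realType) (p : nat).

Definition dH (g g' : state p) : nat := #|[set j | g j != g' j]|.
Definition pk (k : state p) : nat := #|[set j | k j]|.
Definition inN (g : state p) (k : state p) (g' : state p) : bool :=
  [forall j, ~~ k j ==> (g' j == g j)].

(* p_j(k_j | gamma_j) with scaled parameters (xi*A, xi*D) *)
Definition pj (xi : R) (A D : 'I_p -> R) (j : 'I_p) (kj gj : bool) : R :=
  let a := if gj then xi * D j else xi * A j in
  if kj then a else 1 - a.

Definition pRN (xi : R) (A D : 'I_p -> R) (k g : state p) : R :=
  \prod_j pj xi A D j (k j) (g j).

Definition qTHIN (om : R) (k g g' : state p) : R :=
  if inN g k g' then om ^+ dH g g' * (1 - om) ^+ (pk k - dH g g') else 0.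

Definition alphaARN (pi : state p -> R) (xi : R) (A D : 'I_p -> R) (om : R)
    (k g g' : state p) : R :=
  Num.min 1 ((pi g' * pRN xi A D k g' * qTHIN om k g' g) /
             (pi g * pRN xi A D k g * qTHIN om k g g')).

Definition pARN_off (pi : state p -> R) (xi : R) (A D : 'I_p -> R) (om : R)
    (g g' : state p) : R :=
  \sum_k pRN xi A D k g * qTHIN om k g g' * alphaARN pi xi A D om k g g'.

Definition pARN (pi : state p -> R) (xi : R) (A D : 'I_p -> R) (om : R)
    (g g' : state p) : R :=
  if g' != g then pARN_off pi xi A D om g g'
  else 1 - \sum_(h | h != g) pARN_off pi xi A D om g h.

End ARN.

From mathcomp Require Import all_boot all_order all_algebra.
From mathcomp Require Import reals.
From mathcomp Require Import ring.
Set Implicit Arguments. Unset Strict Implicit. Unset Printing Implicit Defensive.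
Import Order.TTheory GRing.Theory Num.Theory.
Local Open Scope ring_scope.

(** For fixed [g, g'], the weight [pRN(k|g) * qTHIN(g, g')] of a neighbourhood
    [k] factorises over the coordinates, and so does the reverse weight; their
    coordinatewise ratio is [1] off the flipped coordinates and [D j / A j] or
    [A j / D j] on them, since the common factor [xi * om] cancels. Hence the
    acceptance probability does not depend on [k], and summing the product
    weights over all [k] gives [prod_j (f_j(0) + f_j(1))], where each factor
    depends on [xi] and [om] only through [xi * om]. *)

Section ARNFactorisation.
Variables (R : realType) (p : nat) (A D : 'I_p -> R).
Hypotheses (A_neq0 : forall j, A j != 0) (D_neq0 : forall j, D j != 0).

Definition thin_weight (om : R) (g g' : state p) (j : 'I_p) (b : bool) : R :=
  if g j != g' j then (if b then om else 0) else (if b then 1 - om else 1).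

Lemma pk_subn_dH (k g g' : state p) : inN g k g' ->
  (pk k - dH g g' = #|[set j | k j && (g j == g' j)]|)%N.
Proof.
move/forallP=> kg.
have := cardsID [set j | g j != g' j] [set j | k j].
have -> : [set j | k j] :&: [set j | g j != g' j] = [set j | g j != g' j].
  by apply/setP => j; rewrite !inE; move: (kg j); case: (k j); case: (g j); case: (g' j).
have -> : [set j | k j] :\: [set j | g j != g' j] = [set j | k j && (g j == g' j)].
  by apply/setP => j; rewrite !inE negbK andbC.
by rewrite /pk /dH => <-; rewrite addKn.
Qed.

Lemma qTHIN_prodE om (k g g' : state p) :
  qTHIN om k g g' = \prod_j thin_weight om g g' j (k j).
Proof.
rewrite /qTHIN; case: ifP => [kg|].
- have split_weight j : thin_weight om g g' j (k j) =
      (if g j != g' j then om else 1) *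
      (if k j && (g j == g' j) then 1 - om else 1).
    move/forallP: kg => /(_ j); rewrite /thin_weight.
    by case: (k j); case: (g j); case: (g' j) => //= _; rewrite ?mul1r ?mulr1.
  rewrite (eq_bigr _ (fun j _ => split_weight j)) big_split /= -!big_mkcond /=.
  rewrite !prodr_const pk_subn_dH //; congr (_ ^+ _ * _ ^+ _);
    by apply: eq_card => j; rewrite inE.
- move/negbT; rewrite negb_forall => /existsP [j].
  rewrite negb_imply => /andP[kj gj]; rewrite (bigD1 j) //= /thin_weight.
  by rewrite eq_sym gj (negbTE kj) mul0r.
Qed.

Definition move_weight (xi om : R) (g g' : state p) (j : 'I_p) (b : bool) : R :=
  pj xi A D j b (g j) * thin_weight om g g' j b.

Lemma pRN_qTHIN_prodE xi om (k g g' : state p) :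
  pRN xi A D k g * qTHIN om k g g' = \prod_j move_weight xi om g g' j (k j).
Proof. by rewrite qTHIN_prodE /pRN -big_split. Qed.

Definition rate (g : state p) (j : 'I_p) : R := if g j then D j else A j.

Definition flip_ratio (g g' : state p) (j : 'I_p) : R :=
  if g j != g' j then rate g' j / rate g j else 1.

Lemma pj_trueE xi (g : state p) j : pj xi A D j true (g j) = xi * rate g j.
Proof. by rewrite /pj /rate; case: (g j). Qed.

Lemma move_weight_rev xi om (g g' : state p) j b :
  move_weight xi om g' g j b = flip_ratio g g' j * move_weight xi om g g' j b.
Proof.
have rate_neq0 : rate g j != 0 by rewrite /rate; case: (g j).
rewrite /move_weight /flip_ratio /thin_weight eq_sym.
case: eqP => [->|_] /=; first by rewrite mul1r.
by case: b; [rewrite !pj_trueE; field | rewrite !mulr0].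
Qed.

Lemma move_weight_sum xi om (g g' : state p) j :
  move_weight xi om g g' j false + move_weight xi om g g' j true =
  if g j != g' j then xi * om * rate g j else 1 - xi * om * rate g j.
Proof.
by rewrite /move_weight /thin_weight /pj /rate; case: (g j); case: (g' j) => /=; ring.
Qed.

Lemma pARN_offE (pi : state p -> R) xi om (g g' : state p) :
  pARN_off pi xi A D om g g' =
  Num.min 1 (pi g' * \prod_j flip_ratio g g' j / pi g) *
  \prod_j (if g j != g' j then xi * om * rate g j else 1 - xi * om * rate g j).
Proof.
set M := Num.min 1 _; set W := fun k : state p => \prod_j move_weight xi om g g' j (k j).
rewrite /pARN_off (eq_bigr (fun k => M * W k)) => [|k _].
  rewrite -mulr_sumr -bigA_distr_bigA /=; congr (_ * _); apply: eq_bigr => j _.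
  by rewrite big_bool /= addrC move_weight_sum.
rewrite /alphaARN -(mulrA (pi g')) -(mulrA (pi g)) !pRN_qTHIN_prodE -/(W k).
have -> : \prod_j move_weight xi om g' g j (k j) = \prod_j flip_ratio g g' j * W k.
  by rewrite -big_split; apply: eq_bigr => j _; rewrite move_weight_rev.
have [->|W_neq0] := eqVneq (W k) 0; first by rewrite mul0r mulr0.
by rewrite mulrA -mulf_div divff // mulr1 mulrC.
Qed.

Lemma pARN_off_prod_invariant (pi : state p -> R) xi1 om1 xi2 om2 :
  xi1 * om1 = xi2 * om2 ->
  pARN_off pi xi1 A D om1 =2 pARN_off pi xi2 A D om2.
Proof. by move=> xo g g'; rewrite !pARN_offE xo. Qed.

End ARNFactorisation.

Theorem corollary1 (R : realType) (p : nat) (eps : R)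
    (A D : 'I_p -> R) (xi1 om1 xi2 om2 : R) (pi : state p -> R) :
  0 < eps -> eps < 1 / 2 ->
  (forall j, eps < A j < 1 - eps) ->
  (forall j, eps < D j < 1 - eps) ->
  eps < xi1 < 1 - eps -> eps < om1 < 1 - eps ->
  eps < xi2 < 1 - eps -> eps < om2 < 1 - eps ->
  xi1 * om1 = xi2 * om2 ->
  (forall g, 0 < pi g) -> \sum_g pi g = 1 ->
  forall g g' : state p,
    pARN pi xi1 A D om1 g g' = pARN pi xi2 A D om2 g g'.
Proof.
move=> eps_gt0 _ A_range D_range _ _ _ _ xo _ _ g g'.
have pos_neq0 (x : R) : eps < x -> x != 0.
  by move=> ex; rewrite gt_eqF // (lt_trans eps_gt0 ex).
have A_neq0 j : A j != 0 by case/andP: (A_range j) => /pos_neq0.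
have D_neq0 j : D j != 0 by case/andP: (D_range j) => /pos_neq0.
have off_eq := pARN_off_prod_invariant A_neq0 D_neq0 pi xo.
rewrite /pARN; case: ifP => _; first exact: off_eq.
by congr (1 - _); apply: eq_bigr => h _; exact: off_eq.
Qed.
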